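(* Let $X$ be a compact metrizable space, let $f\in\mathrm{C}(X)$ be self-adjoint, and let $\varepsilon>0$. Then there exist $n\in\mathbb N$ and self-adjoint $f_1,\dots,f_n\in\mathrm{C}(X)$ such that $\|f-f_i\|_\infty<\varepsilon$ for $i=1,\dots,n$, and $\frac1n\,|\{1\le i\le n: f_i(x)=0\}|<\varepsilon$ for all $x\in X$. *)

From HB Require Import structures.
From mathcomp Require Import all_boot all_order all_algebra.
From mathcomp Require Import all_classical all_reals all_analysis.
Set Implicit Arguments. Unset Strict Implicit. Unset Printing Implicit Defensive.
Import Order.TTheory GRing.Theory Num.Theory.
Import numFieldNormedType.Exports.
Local Open Scope classical_set_scope.
Local Open Scope ring_scope.

Definition supnorm (R : realType) (X : Type) (g : X -> R) : R :=
  sup [set `|g x| | x in [set: X]].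

From HB Require Import structures.
From mathcomp Require Import all_boot all_order all_algebra.
From mathcomp Require Import all_classical all_reals all_analysis.
Set Implicit Arguments. Unset Strict Implicit. Unset Printing Implicit Defensive.
Import Order.TTheory GRing.Theory Num.Theory.
Import numFieldNormedType.Exports.
Local Open Scope classical_set_scope.
Local Open Scope ring_scope.

(* Take f_i := f + eps i / n for i < n, with n > 1/eps. The shifts are
   distinct and lie in [0, eps), so every f_i is eps-close to f and at most
   one f_i vanishes at any given point, whence the proportion is <= 1/n < eps. *)

Lemma card_fiber_le1 (I : finType) (T : eqType) (g : I -> T) (y : T) :
  injective g -> (#|[pred i | g i == y]| <= 1)%N.
Proof.
move=> g_inj; apply/card_le1_eqP => i j; rewrite !inE => /eqP gi /eqP gj.
by apply: g_inj; rewrite gi gj.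
Qed.

Section Shifts.
Variable R : realType.

Lemma supnorm_cst (X : Type) (c : R) : supnorm (fun _ : X => c) <= `|c|.
Proof.
rewrite /supnorm; have [[x0 _]|noX] := pselect (exists x : X, True).
  have -> : [set `|c| | x in [set: X]] = [set `|c|].
    by apply/seteqP; split => [y [x _ <-]//|y ->]; exists x0.
  by rewrite sup1.
have -> : [set `|c| | x in [set: X]] = set0.
  by apply/seteqP; split => [y [x _ _]|y //]; apply: noX; exists x.
by rewrite sup0.
Qed.

Lemma supnorm_subDr (X : Type) (f : X -> R) (c : R) :
  supnorm (fun x => f x - (f x + c)) <= `|c|.
Proof.
have -> : (fun x => f x - (f x + c)) = (fun _ => - c).
  by apply/funext => x; rewrite opprD addrA subrr add0r.
by rewrite -normrN; apply: supnorm_cst.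
Qed.

Definition grid (eps : R) (n : nat) (i : 'I_n) : R := eps * i%:R / n%:R.

Variable eps : R.
Hypothesis eps_gt0 : 0 < eps.

Lemma grid_ge0 n (i : 'I_n) : 0 <= grid eps i.
Proof. by rewrite divr_ge0 // mulr_ge0 // ltW. Qed.

Lemma grid_lt n (i : 'I_n) : grid eps i < eps.
Proof.
have n_gt0 : 0 < n%:R :> R by rewrite ltr0n (leq_ltn_trans (leq0n i)).
by rewrite ltr_pdivrMr // ltr_pM2l // ltr_nat.
Qed.

Lemma grid_inj n : injective (@grid eps n).
Proof.
move=> i j /(congr1 (fun t => t * n%:R / eps)).
have n_gt0 : (0 < n)%N := leq_ltn_trans (leq0n i) (ltn_ord i).
rewrite !mulfVK ?pnatr_eq0 -?lt0n // ![eps * _]mulrC !mulfK ?gt_eqF //.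
by move/eqP; rewrite eqr_nat => /eqP/val_inj.
Qed.

Lemma truncn_invS_inv_lt : ((Num.truncn eps^-1).+1%:R)^-1 < eps.
Proof.
by rewrite -[X in _ < X]invrK ltf_pV2 ?posrE ?invr_gt0 // truncnS_gt.
Qed.

End Shifts.

Theorem lemma3p6 (R : realType) (X : pseudoMetricType R)
    (hX : hausdorff_space X) (cX : compact [set: X])
    (f : X -> R) (hf : continuous f) (eps : R) (heps : 0 < eps) :
  exists (n : nat) (F : 'I_n -> X -> R),
    (0 < n)%N /\
    (forall i, continuous (F i)) /\
    (forall i, supnorm (fun x => f x - F i x) < eps) /\
    (forall x : X, (#|[pred i : 'I_n | F i x == 0]|%:R / n%:R : R) < eps).
Proof.
set n := (Num.truncn eps^-1).+1.
exists n, (fun i x => f x + grid eps i); split => //; split; [|split].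
- by move=> i x; apply: cvgD; [exact: hf | exact: cvg_cst].
- move=> i; apply: le_lt_trans (supnorm_subDr _ _) _.
  by rewrite ger0_norm ?grid_ge0 ?grid_lt.
- move=> x; apply: le_lt_trans (truncn_invS_inv_lt heps).
  rewrite -[X in _ <= X]mul1r ler_pM2r ?invr_gt0 ?ltr0n // lern1.
  apply: card_fiber_le1 => i j /addrI; exact: grid_inj.
Qed.
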